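(* Let $R$ be a finite local Frobenius ring which is not a field and has odd characteristic, with a fixed primitive additive character $\psi$, and let $\tau$ be a non-primitive multiplicative character of $R$. Then $$\sum_{a\in R^\times}|K_\tau(a)|^4=3\,|R^\times|\,|R|^2.$$
   Context: All rings are finite and commutative with identity; $R^\times$ is the unit group; $M$ is the maximal ideal. An additive character $(R,+)\to\mathbb{C}^*$ is primitive if the only ideal on which it is identically $1$ is $(0)$; $R$ is Frobenius if such a character exists. A multiplicative character is a homomorphism $R^\times\to\mathbb{C}^*$; its conductor is $R$ if it is trivial, and otherwise the largest ideal $I\subseteq M$ such that it is identically $1$ on $1+I$; it is primitive if its conductor is $(0)$. $K_\tau(a)=\sum_{u\in R^\times}\tau(u)\psi(u+au^{-1})$. Odd characteristic means $R/M$ has odd characteristic. *)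

From HB Require Import structures.
From mathcomp Require Import all_boot all_order all_algebra all_fingroup all_field.
Set Implicit Arguments. Unset Strict Implicit. Unset Printing Implicit Defensive.
Import Order.TTheory GRing.Theory Num.Theory.
Local Open Scope ring_scope.

Section Defs.
Variable R : finComUnitRingType.

Definition is_ideal (I : {set R}) : Prop :=
  [/\ 0 \in I,
      (forall x y, x \in I -> y \in I -> x + y \in I),
      (forall x, x \in I -> - x \in I) &
      (forall r x, x \in I -> r * x \in I)].

(* The set of non-units; in a local ring this is the maximal ideal M. *)
Definition nonunits : {set R} := [set x : R | x \isn't a GRing.unit].

Definition is_local : Prop := is_ideal nonunits.

Definition is_add_char (psi : R -> algC) : Prop :=
  (forall x y, psi (x + y) = psi x * psi y) /\ (forall x, psi x != 0).

Definition primitive_add_char (psi : R -> algC) : Prop :=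
  is_add_char psi /\
  forall I : {set R}, is_ideal I -> (forall x, x \in I -> psi x = 1) -> I = [set 0].

Definition is_mult_char (tau : {unit R} -> algC) : Prop :=
  (forall u v, tau (u * v)%g = tau u * tau v) /\ (forall u, tau u != 0).

Definition trivial_char (tau : {unit R} -> algC) : Prop := forall u, tau u = 1.

(* tau is identically 1 on 1 + I (elements of 1 + I with I in M are units). *)
Definition trivial_on_1plus (tau : {unit R} -> algC) (I : {set R}) : Prop :=
  forall u : {unit R}, val u - 1 \in I -> tau u = 1.

Definition is_conductor (tau : {unit R} -> algC) (I : {set R}) : Prop :=
  (trivial_char tau -> I = setT) /\
  (~ trivial_char tau ->
     [/\ is_ideal I, I \subset nonunits, trivial_on_1plus tau I &
           forall J : {set R}, is_ideal J -> J \subset nonunits ->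
             trivial_on_1plus tau J -> J \subset I]).

Definition primitive_mult_char (tau : {unit R} -> algC) : Prop :=
  is_conductor tau [set 0].

Definition Ktau (tau : {unit R} -> algC) (psi : R -> algC) (a : R) : algC :=
  \sum_(u : {unit R}) tau u * psi (val u + a * (val u)^-1).

End Defs.

(* Since tau is not primitive, it is trivial on 1 + S for the socle S = ann M,
   the minimal nonzero ideal. Averaging K(a) over the substitutions
   u |-> u (1 + s), s in S, multiplies the term of u by psi((u - a/u) s), whose
   average vanishes unless u^2 = a mod M. As 2 is a unit, these u form two cosets
   b + M and -b + M, so K(a) = A(b) + A(-b) where the coset sums satisfy
   |A(b)|^2 = |R| (substitute v = u (1 - z), z in M, and use duality
   |M| |S| = |R|). Hence |K(a)|^4 = 6 |R|^2 plus cross terms when a is a square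
   mod M, and K(a) = 0 otherwise; summed over a, every cross term becomes a sum
   of psi(a c) over a coset of M with c a unit, which is 0. Finally exactly half
   of the units are squares mod M. *)

From HB Require Import structures.
From mathcomp Require Import all_boot all_order all_algebra all_fingroup all_field.
From mathcomp Require Import ring.
Set Implicit Arguments. Unset Strict Implicit. Unset Printing Implicit Defensive.
Import GRing.Theory Num.Theory.
Local Open Scope ring_scope.

Lemma big_inj_card (T : finType) (V : nmodType) (A B : {set T}) (g : T -> T)
    (F : T -> V) :
  {in A &, injective g} -> {in A, forall x, g x \in B} -> (#|B| <= #|A|)%N ->
  \sum_(x in B) F x = \sum_(x in A) F (g x).
Proof.
move=> g_inj gAB leBA; have gA_B : g @: A = B.
  apply/eqP; rewrite eqEcard card_in_imset // leBA andbT.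
  by apply/subsetP => _ /imsetP[x Ax ->]; apply: gAB.
by rewrite -gA_B big_imset.
Qed.

Lemma conjC_unity_root (z : algC) n : (0 < n)%N -> z ^+ n = 1 -> z^* = z^-1.
Proof.
move=> n_gt0 zn1; have normz1 : `|z| = 1.
  by apply/eqP; rewrite -(pexpr_eq1 n_gt0) // -normrX zn1 normr1.
by rewrite invC_norm normz1 expr1n invr1 mul1r.
Qed.

Lemma normC4_add (A1 A2 r : algC) : A1 * A1^* = r -> A2 * A2^* = r ->
  `|A1 + A2| ^+ 4 = 6%:R * r ^+ 2 + 4%:R * r * (A1 * A2^* + A2 * A1^*)
                    + (A1 * (A1 * A2^* ^+ 2) + A2 * (A2 * A1^* ^+ 2)).
Proof.
move=> normA1 normA2.
have -> : `|A1 + A2| ^+ 4 = (`|A1 + A2| ^+ 2) ^+ 2 by rewrite -exprM.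
rewrite normCK rmorphD /=; set B1 := A1^* in normA1 *; set B2 := A2^* in normA2 *.
transitivity ((A1 * B1 + A2 * B2) ^+ 2 + 2%:R * (A1 * B1) * (A2 * B2)
  + 2%:R * (A1 * B1 + A2 * B2) * (A1 * B2 + A2 * B1)
  + (A1 * (A1 * B2 ^+ 2) + A2 * (A2 * B1 ^+ 2))); first by ring.
by rewrite normA1 normA2; ring.
Qed.

Section AdditiveCharacter.
Variables (V : finZmodType) (psi : V -> algC).
Hypothesis psiD : {morph psi : x y / x + y >-> x * y}.
Hypothesis psi_neq0 : forall x, psi x != 0.

Lemma psi0 : psi 0 = 1.
Proof. by apply: (mulfI (psi_neq0 0)); rewrite -psiD addr0 mulr1. Qed.

Lemma psiN x : psi (- x) = (psi x)^-1.
Proof. by apply: (mulfI (psi_neq0 x)); rewrite -psiD subrr psi0 divff. Qed.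

Lemma psiMn x n : psi (x *+ n) = psi x ^+ n.
Proof. by elim: n => [|n IHn]; rewrite ?psi0 // mulrS psiD IHn exprS. Qed.

Lemma conj_psi x : (psi x)^* = psi (- x).
Proof.
rewrite psiN; apply: (conjC_unity_root (order_gt0 x)).
by rewrite -psiMn -FinRing.zmodXgE expg_order psi0.
Qed.

End AdditiveCharacter.

Section MultiplicativeCharacter.
Variables (G : finGroupType) (tau : G -> algC).
Hypothesis tauM : {morph tau : u v / (u * v)%g >-> u * v}.
Hypothesis tau_neq0 : forall u, tau u != 0.

Lemma tau1 : tau 1%g = 1.
Proof. by apply: (mulfI (tau_neq0 1%g)); rewrite -tauM mulg1 mulr1. Qed.

Lemma tauX u n : tau (u ^+ n)%g = tau u ^+ n.
Proof. by elim: n => [|n IHn]; rewrite ?tau1 // expgS tauM IHn exprS. Qed.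

Lemma tauV u : tau (u^-1)%g = (tau u)^-1.
Proof. by apply: (mulfI (tau_neq0 u)); rewrite -tauM mulgV tau1 divff. Qed.

Lemma conj_tau u : (tau u)^* = (tau u)^-1.
Proof. by apply: (conjC_unity_root (order_gt0 u)); rewrite -tauX expg_order tau1. Qed.

End MultiplicativeCharacter.

Section Annihilator.
Variable R : finComUnitRingType.

Definition ann (J : {set R}) : {set R} := [set x | [forall y in J, x * y == 0]].

Lemma annP (J : {set R}) x : reflect (forall y, y \in J -> x * y = 0) (x \in ann J).
Proof.
rewrite inE; apply: (iffP forall_inP) => xJ0 y /xJ0; first exact: eqP.
by move->.
Qed.

Lemma ann_subset (A B : {set R}) : A \subset B -> ann B \subset ann A.
Proof.
move=> /subsetP sAB; apply/subsetP => x /annP xB0.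
by apply/annP => y /sAB; apply: xB0.
Qed.

Lemma is_ideal_ann (J : {set R}) : is_ideal (ann J).
Proof.
split.
- by apply/annP => y _; rewrite mul0r.
- move=> x y /annP x0 /annP y0; apply/annP => z zJ.
  by rewrite mulrDl x0 ?y0 ?addr0.
- by move=> x /annP x0; apply/annP => z zJ; rewrite mulNr x0 ?oppr0.
- by move=> r x /annP x0; apply/annP => z zJ; rewrite -mulrA x0 ?mulr0.
Qed.

Lemma is_idealT : is_ideal [set: R].
Proof. by split=> *; rewrite inE. Qed.

Lemma is_ideal0 : is_ideal [set 0 : R].
Proof.
split=> [|x y|x|r x]; rewrite ?inE //.
- by move=> /eqP-> /eqP->; rewrite addr0.
- by move=> /eqP->; rewrite oppr0.
- by move=> /eqP->; rewrite mulr0.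
Qed.

Lemma is_ideal_scale (x : R) (J : {set R}) :
  is_ideal J -> is_ideal [set x * y | y in J].
Proof.
case=> J0 JD JN JM; split.
- by apply/imsetP; exists 0; rewrite ?mulr0.
- move=> _ _ /imsetP[y yJ ->] /imsetP[z zJ ->].
  by apply/imsetP; exists (y + z); [apply: JD | rewrite mulrDr].
- move=> _ /imsetP[y yJ ->].
  by apply/imsetP; exists (- y); [apply: JN | rewrite mulrN].
- move=> r _ /imsetP[y yJ ->].
  by apply/imsetP; exists (r * y); [apply: JM | rewrite mulrCA].
Qed.

Variable psi : R -> algC.
Hypothesis psi_prim : primitive_add_char psi.

Let psiD : {morph psi : x y / x + y >-> x * y}.
Proof. by case: psi_prim => -[]. Qed.
Let psi_neq0 x : psi x != 0.
Proof. by case: psi_prim => -[]. Qed.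

(* Orthogonality: [y |-> psi (x * y)] is a character of the group J, trivial
   exactly when x kills J, by primitivity applied to the ideal xJ. *)
Lemma sum_psi_ideal (J : {set R}) x : is_ideal J ->
  \sum_(y in J) psi (x * y) = if x \in ann J then #|J|%:R else 0.
Proof.
move=> idJ; case: (boolP (x \in ann J)) => [/annP xJ0|xJn0].
  by rewrite (eq_bigr (fun=> 1)) ?sumr_const // => y /xJ0->; rewrite psi0.
have [y0 y0J psi_y0] : exists2 y0, y0 \in J & psi (x * y0) != 1.
  apply/exists_inP; apply: contraR xJn0 => /exists_inPn psi1.
  have xJ0 : [set x * y | y in J] = [set 0].
    apply: psi_prim.2 (is_ideal_scale x idJ) _ => _ /imsetP[z zJ ->].
    by apply/eqP; rewrite -[_ == _]negbK psi1.
  by apply/annP => y yJ; apply/set1P; rewrite -xJ0 imset_f.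
set S := \sum_(y in J) psi (x * y).
have S_shift : S = S * psi (x * y0).
  rewrite {1}/S (@big_inj_card _ _ J J (+%R^~ y0)) //.
  - by rewrite /S big_distrl; apply: eq_bigr => y _; rewrite /= mulrDr psiD.
  - by move=> y z _ _; apply: addIr.
  - by case: idJ => _ JD _ _ y yJ; apply: JD.
apply/eqP; move: psi_y0; apply: contraR => S_neq0.
by rewrite -(mulfI S_neq0 (etrans (mulr1 S) S_shift)).
Qed.

Lemma sum_psi x : \sum_y psi (x * y) = if x == 0 then #|R|%:R else 0.
Proof.
have -> : \sum_y psi (x * y) = \sum_(y in [set: R]) psi (x * y).
  by apply: eq_bigl => y; rewrite inE.
rewrite sum_psi_ideal ?cardsT; last exact: is_idealT.
congr (if _ then _ else _); apply/annP/eqP => [x0|->]; last by move=> y; rewrite mul0r.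
by rewrite -[x]mulr1 x0 ?inE.
Qed.

(* Double counting [sum_(x, y in J) psi (x * y)] in both orders. *)
Lemma card_ann (J : {set R}) : is_ideal J -> (#|J| * #|ann J|)%N = #|R|.
Proof.
move=> idJ; apply/eqP; rewrite -(eqr_nat algC); apply/eqP.
transitivity (\sum_x \sum_(y in J) psi (x * y)).
  rewrite (eq_bigr _ (fun x _ => sum_psi_ideal x idJ)) -big_mkcond /=.
  by rewrite sumr_const natrM mulr_natr.
rewrite exchange_big /= (eq_bigr (fun y => if y == 0 then #|R|%:R else 0)); last first.
  by move=> y _; rewrite -sum_psi; apply: eq_bigr => x _; rewrite mulrC.
case: idJ => J0 _ _ _; rewrite (bigD1 0) //= eqxx big1 ?addr0 // => y /andP[_].
by move/negbTE->.
Qed.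

Lemma annK (J : {set R}) : is_ideal J -> ann (ann J) = J.
Proof.
move=> idJ; apply/esym/eqP; rewrite eqEcard; apply/andP; split.
  by apply/subsetP => y yJ; apply/annP => x /annP xJ0; rewrite mulrC xJ0.
have annJ_gt0 : (0 < #|ann J|)%N.
  by apply/card_gt0P; exists 0; apply/annP => y _; rewrite mul0r.
by rewrite -(leq_pmul2l annJ_gt0) (card_ann (is_ideal_ann J)) mulnC card_ann.
Qed.

End Annihilator.

Section LocalRing.
Variable R : finComUnitRingType.
Hypothesis R_local : is_local R.
Local Notation M := (nonunits R).

Lemma nonunitsE x : (x \in M) = (x \isn't a GRing.unit).
Proof. by rewrite inE. Qed.

Lemma nonunitsM x y : (x * y \in M) = (x \in M) || (y \in M).
Proof. by rewrite !nonunitsE unitrM negb_and. Qed.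

Lemma nonunits0 : 0 \in M.
Proof. by rewrite nonunitsE unitr0. Qed.

Lemma nonunitsD x y : x \in M -> y \in M -> x + y \in M.
Proof. by case: R_local => _ + _ _; apply. Qed.

Lemma nonunitsN x : x \in M -> - x \in M.
Proof. by case: R_local => _ _ + _; apply. Qed.

Lemma nonunitsB x y : x \in M -> y \in M -> x - y \in M.
Proof. by move=> xM /nonunitsN; apply: nonunitsD. Qed.

Lemma nonunitsMl r x : x \in M -> r * x \in M.
Proof. by rewrite nonunitsM orbC => ->. Qed.

Lemma nonunitsMr r x : x \in M -> x * r \in M.
Proof. by rewrite nonunitsM => ->. Qed.

Lemma nonunitsBC x y : (x - y \in M) = (y - x \in M).
Proof. by apply/idP/idP => /nonunitsN; rewrite opprB. Qed.

Lemma unitrD_nonunits u m : u \is a GRing.unit -> m \in M -> u + m \is a GRing.unit.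
Proof.
move=> u_unit mM; apply: contraLR u_unit; rewrite -!nonunitsE => /nonunitsB.
by move=> /(_ m mM); rewrite addrK.
Qed.

Lemma unitr_congr u v : u \is a GRing.unit -> v - u \in M -> v \is a GRing.unit.
Proof. by move=> u_unit /(unitrD_nonunits u_unit); rewrite addrC subrK. Qed.

Lemma nonunits_invB x y : x \is a GRing.unit -> y \is a GRing.unit ->
  x - y \in M -> x^-1 - y^-1 \in M.
Proof.
move=> x_unit y_unit xyM.
have -> : x^-1 - y^-1 = (y - x) * x^-1 * y^-1.
  by rewrite mulrBl divrr // mulrBl mul1r mulrAC divrr // mul1r.
by do 2!apply: nonunitsMr; rewrite nonunitsBC.
Qed.

Definition Mcoset (b : R) : {set R} := [set u | u - b \in M].

Lemma mem_Mcoset b u : (u \in Mcoset b) = (u - b \in M).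
Proof. by rewrite inE. Qed.

Lemma Mcoset_unit b u : b \is a GRing.unit -> u \in Mcoset b -> u \is a GRing.unit.
Proof. by rewrite mem_Mcoset; apply: unitr_congr. Qed.

Lemma card_Mcoset b : #|Mcoset b| = #|M|.
Proof.
have -> : Mcoset b = [set b + m | m in M].
  apply/setP => u; rewrite mem_Mcoset; apply/idP/imsetP => [ubM|[m mM ->]].
    by exists (u - b); rewrite // addrC subrK.
  by rewrite addrC addKr.
by rewrite card_imset //; apply: addrI.
Qed.

Lemma Mcoset_eq x y : x - y \in M -> Mcoset x = Mcoset y.
Proof.
move=> xyM; apply/setP => v; rewrite !mem_Mcoset; apply/idP/idP => vM.
  by rewrite -[v](subrK x) -addrA nonunitsD.
by rewrite -[v](subrK y) -addrA nonunitsD // nonunitsBC.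
Qed.

Lemma mem_Mcoset_opp (b u : R) : (- u \in Mcoset (- b)) = (u \in Mcoset b).
Proof.
rewrite !mem_Mcoset -opprD; apply/idP/idP; last exact: nonunitsN.
by move/nonunitsN; rewrite opprK.
Qed.

End LocalRing.

Section Socle.
Variables (R : finComUnitRingType) (psi : R -> algC).
Hypothesis R_local : is_local R.
Hypothesis psi_prim : primitive_add_char psi.
Hypothesis R_not_field : exists x : R, x != 0 /\ x \isn't a GRing.unit.
Local Notation M := (nonunits R).

Definition socle : {set R} := ann M.

Lemma is_ideal_socle : is_ideal socle.
Proof. exact: is_ideal_ann. Qed.

Lemma ann_socle : ann socle = M.
Proof. exact: (annK psi_prim R_local). Qed.

Lemma card_nonunits_socle : (#|M| * #|socle|)%N = #|R|.
Proof. exact: (card_ann psi_prim R_local). Qed.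

Lemma socle_mulr s m : s \in socle -> m \in M -> s * m = 0.
Proof. by move/annP; apply. Qed.

Lemma socle_nonunits : socle \subset M.
Proof.
apply/subsetP => s s_soc; have [x [x_neq0]] := R_not_field; rewrite -nonunitsE => xM.
apply: contraT; rewrite nonunitsE negbK => s_unit; move: x_neq0.
by rewrite -(mulKr s_unit x) (socle_mulr s_soc xM) mulr0 eqxx.
Qed.

Lemma socle_sqr s : s \in socle -> s * s = 0.
Proof. by move=> s_soc; rewrite socle_mulr // (subsetP socle_nonunits). Qed.

Lemma unit_1socle s : s \in socle -> 1 + s \is a GRing.unit.
Proof. by move=> /(subsetP socle_nonunits); apply: unitrD_nonunits; rewrite ?unitr1. Qed.

Lemma inv_1socle s : s \in socle -> (1 + s)^-1 = 1 - s.
Proof.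
move=> s_soc; apply: mulr1_eq.
by rewrite mulrBr mulr1 mulrDl mul1r socle_sqr // addr0 addrK.
Qed.

Lemma socle_subset (J : {set R}) : is_ideal J -> ~~ (J \subset [set 0]) ->
  socle \subset J.
Proof.
move=> idJ /subsetPn[y yJ]; rewrite inE => y_neq0.
rewrite -(annK psi_prim idJ); apply: ann_subset; apply/subsetP => x /annP xJ0.
rewrite nonunitsE; apply: contra y_neq0 => x_unit.
by rewrite -(mulKr x_unit y) xJ0 ?mulr0.
Qed.

(* Otherwise every ideal on which tau is trivial would be 0, as a nonzero one
   contains the socle, i.e. tau would be primitive. *)
Lemma trivial_on_1plus_socle (tau : {unit R} -> algC) :
  is_mult_char tau -> ~ primitive_mult_char tau -> trivial_on_1plus tau socle.
Proof.
case=> tauM tau_neq0 tau_nprim.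
suff /forallP triv : [forall u : {unit R}, (val u - 1 \in socle) ==> (tau u == 1)].
  by move=> u /(implyP (triv u)) /eqP.
apply/negPn/negP => ntriv; apply: tau_nprim.
have triv_ideal0 J : is_ideal J -> trivial_on_1plus tau J -> J \subset [set 0].
  move=> idJ trivJ; apply: contraNT ntriv => /(socle_subset idJ) /subsetP sJ.
  by apply/forallP => u; apply/implyP => /sJ /trivJ->.
split=> [triv | _].
  have /subsetP/(_ 1) := triv_ideal0 _ (is_idealT R) (fun u _ => triv u).
  by rewrite !inE oner_eq0 => /(_ isT).
split.
- exact: is_ideal0 R.
- by apply/subsetP => x /set1P->; apply: nonunits0.
- move=> u /set1P/eqP; rewrite subr_eq0 => /eqP u1.
  have -> : u = 1%g by apply: val_inj; rewrite u1.
  exact: tau1 tauM tau_neq0.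
- by move=> J idJ _ trivJ; apply: triv_ideal0.
Qed.

End Socle.

Lemma imset_val_units (R : finComUnitRingType) :
  val @: [set: {unit R}] = [set x : R | x \is a GRing.unit].
Proof.
apply/setP => x; rewrite inE; apply/imsetP/idP => [[u _ ->]|x_unit].
  exact: valP.
by exists (FinRing.Unit x_unit).
Qed.

Lemma card_units (R : finComUnitRingType) :
  #|[set: {unit R}]| = #|[set x : R | x \is a GRing.unit]|.
Proof. by rewrite -imset_val_units card_imset //; apply: val_inj. Qed.

Lemma sum_unit_val (R : finComUnitRingType) (V : nmodType) (F : R -> V) :
  \sum_(u : {unit R}) F (val u) = \sum_(x in [set x : R | x \is a GRing.unit]) F x.
Proof.
rewrite -imset_val_units big_imset /=; last by move=> u v _ _; apply: val_inj.
by apply: eq_bigl => u; rewrite inE.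
Qed.

Section Kloosterman.
Variables (R : finComUnitRingType) (psi : R -> algC) (tau : {unit R} -> algC).
Hypothesis R_local : is_local R.
Hypothesis R_not_field : exists x : R, x != 0 /\ x \isn't a GRing.unit.
Hypothesis R_odd : (2%:R : R) \notin nonunits R.
Hypothesis psi_prim : primitive_add_char psi.
Hypothesis tau_mult : is_mult_char tau.
Hypothesis tau_nprim : ~ primitive_mult_char tau.
Local Notation M := (nonunits R).
Local Notation U := [set x : R | x \is a GRing.unit].

Let psiD : {morph psi : x y / x + y >-> x * y}.
Proof. by case: psi_prim => -[]. Qed.
Let psi_neq0 x : psi x != 0.
Proof. by case: psi_prim => -[]. Qed.
Let tauM : {morph tau : u v / (u * v)%g >-> u * v}.
Proof. by case: tau_mult. Qed.
Let tau_neq0 u : tau u != 0.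
Proof. by case: tau_mult. Qed.

Lemma card_nonunits_neq0 : #|M|%:R != 0 :> algC.
Proof. by rewrite pnatr_eq0 -lt0n; apply/card_gt0P; exists 0; apply: nonunits0. Qed.

Lemma unitr2 : (2%:R : R) \is a GRing.unit.
Proof. by move: R_odd; rewrite nonunitsE negbK. Qed.

Definition taur (x : R) : algC := if insub x is Some u then tau u else 0.

Lemma taur_val (u : {unit R}) : taur (val u) = tau u.
Proof. by rewrite /taur valK. Qed.

Lemma taurM x y : x \is a GRing.unit -> y \is a GRing.unit ->
  taur (x * y) = taur x * taur y.
Proof.
move=> x_unit y_unit; have -> : x * y = val (FinRing.Unit x_unit * FinRing.Unit y_unit)%g.
  by rewrite FinRing.val_unitM.
by rewrite !taur_val tauM -!taur_val.
Qed.

Lemma taur1 : taur 1 = 1.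
Proof. by rewrite -FinRing.val_unit1 taur_val (tau1 tauM tau_neq0). Qed.

Lemma conj_taur x : x \is a GRing.unit -> (taur x)^* = taur x^-1.
Proof.
move=> x_unit; have -> : x = val (FinRing.Unit x_unit) by [].
by rewrite -FinRing.val_unitV !taur_val conj_tau ?(tauV tauM tau_neq0).
Qed.

Lemma taur_1socle s : s \in socle R -> taur (1 + s) = 1.
Proof.
move=> s_soc; have s_unit := unit_1socle R_local R_not_field s_soc.
have -> : 1 + s = val (FinRing.Unit s_unit) by [].
rewrite taur_val (trivial_on_1plus_socle psi_prim tau_mult tau_nprim) //.
by rewrite /= addrC addKr.
Qed.

Definition phi (a u : R) : algC := taur u * psi (u + a * u^-1).

Definition K (a : R) : algC := \sum_(u in U) phi a u.

Lemma Ktau_K a : Ktau tau psi a = K a.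
Proof.
by rewrite /K -(sum_unit_val (phi a)); apply: eq_bigr => u _; rewrite /phi taur_val.
Qed.

Lemma conj_phi a v : v \is a GRing.unit ->
  (phi a v)^* = taur v^-1 * psi (- (v + a * v^-1)).
Proof. by move=> v_unit; rewrite rmorphM /= conj_taur // conj_psi. Qed.

Lemma phi_socle_shift a u s : u \is a GRing.unit -> s \in socle R ->
  phi a (u * (1 + s)) = phi a u * psi ((u - a * u^-1) * s).
Proof.
move=> u_unit s_soc; have s_unit := unit_1socle R_local R_not_field s_soc.
rewrite /phi taurM // taur_1socle // mulr1 invrM // inv_1socle //.
by rewrite -mulrA -psiD; congr (_ * psi _); ring.
Qed.

Definition sqrt_mod (a : R) : {set R} :=
  [set u | (u \is a GRing.unit) && (u * u - a \in M)].

Lemma K_sqrt_mod a : K a = \sum_(u in sqrt_mod a) phi a u.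
Proof.
have card_soc_neq0 : #|socle R|%:R != 0 :> algC.
  by rewrite pnatr_eq0 -lt0n; apply/card_gt0P; exists 0; apply/annP => y _; rewrite mul0r.
apply: (mulfI card_soc_neq0); rewrite mulr_natl -sumr_const.
transitivity (\sum_(u in U) \sum_(s in socle R) phi a u * psi ((u - a * u^-1) * s)).
  rewrite [RHS]exchange_big; apply: eq_bigr => s s_soc /=.
  have s_unit := unit_1socle R_local R_not_field s_soc.
  rewrite /K (@big_inj_card _ _ U U (fun u => u * (1 + s))) //.
  - by apply: eq_bigr => u; rewrite inE => u_unit; rewrite phi_socle_shift.
  - by move=> u v _ _; apply: mulIr.
  - by move=> u; rewrite !inE => u_unit; rewrite unitrM u_unit.
have -> : \sum_(u in sqrt_mod a) phi a u = \sum_(u in U | u * u - a \in M) phi a u.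
  by apply: eq_bigl => u; rewrite !inE.
rewrite big_mkcondr mulr_sumr; apply: eq_bigr => u; rewrite inE => u_unit.
rewrite -mulr_sumr (sum_psi_ideal psi_prim _ (is_ideal_socle R)).
rewrite (ann_socle R_local psi_prim).
have -> : u * u - a = u * (u - a * u^-1) by rewrite mulrBr mulrCA divrr ?mulr1.
rewrite nonunitsM (nonunitsE u) u_unit /=.
by case: (u - a / u \in M); rewrite ?mulr0 // mulrC.
Qed.

Lemma mem_sqrt_mod a b u : b \is a GRing.unit -> b * b - a \in M ->
  (u \in sqrt_mod a) = (u \in Mcoset b) || (u \in Mcoset (- b)).
Proof.
move=> b_unit baM; rewrite inE !mem_Mcoset opprK.
have -> : u * u - a = (u - b) * (u + b) + (b * b - a) by ring.
apply/andP/orP => [[_ uuM]|[ubM|ubM]].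
- by move: (nonunitsB R_local uuM baM); rewrite addrK nonunitsM => /orP.
- split; first by apply: (unitr_congr R_local) b_unit ubM.
  by apply: (nonunitsD R_local) => //; apply: nonunitsMr.
- split; last by apply: (nonunitsD R_local) => //; apply: nonunitsMl.
  by apply: (unitr_congr R_local) (_ : - b \is a GRing.unit) _; rewrite ?unitrN // opprK.
Qed.

Lemma disjoint_Mcoset_opp (b : R) :
  b \is a GRing.unit -> [disjoint Mcoset b & Mcoset (- b)].
Proof.
move=> b_unit; apply/pred0P => u /=; rewrite !mem_Mcoset opprK.
apply/negP => /andP[ubM ubM'].
have := nonunitsB R_local ubM' ubM.
have -> : u + b - (u - b) = 2%:R * b by ring.
by rewrite nonunitsM !nonunitsE unitr2 b_unit.
Qed.

Lemma sum_sqrt_mod_split a b (F : R -> algC) : b \is a GRing.unit -> b * b - a \in M ->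
  \sum_(u in sqrt_mod a) F u = \sum_(u in Mcoset b) F u + \sum_(u in Mcoset (- b)) F u.
Proof.
move=> b_unit baM; rewrite -bigU ?disjoint_Mcoset_opp //=.
by apply: eq_bigl => u; rewrite (mem_sqrt_mod u b_unit baM).
Qed.

Definition Kcoset (a b : R) : algC := \sum_(u in Mcoset b) phi a u.

Lemma unit_1subM z : z \in M -> 1 - z \is a GRing.unit.
Proof. by move=> zM; apply: (unitrD_nonunits R_local); rewrite ?unitr1 ?nonunitsN. Qed.

Lemma phi_mul_conj_scale a u z : u \is a GRing.unit -> z \in M ->
  phi a u * (phi a (u * (1 - z)))^* =
  taur (1 - z)^-1 * psi (z * (u - a * u^-1 * (1 - z)^-1)).
Proof.
move=> u_unit zM; have z_unit := unit_1subM zM; set w := (1 - z)^-1.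
have zw : (1 - z) * w = 1 by rewrite mulrV.
rewrite conj_phi ?unitrM ?u_unit // invrM // /phi -/w.
rewrite mulrACA taurM ?unitrV // [taur u * _]mulrCA -taurM ?unitrV // divrr //.
rewrite taur1 mulr1 -psiD; congr (_ * psi _).
transitivity (z * (u - a * u^-1 * w) + a * u^-1 * (1 - (1 - z) * w)); first by ring.
by rewrite zw subrr mulr0 addr0.
Qed.

Section CosetSum.
Variables a b : R.
Hypotheses (b_unit : b \is a GRing.unit) (baM : b * b - a \in M).

Lemma coset_map_nonunits z u : z \in M -> u \in Mcoset b ->
  u - a * u^-1 * (1 - z)^-1 \in M.
Proof.
move=> zM ubM; have u_unit := Mcoset_unit R_local b_unit ubM; set w := (1 - z)^-1.
have zw : (1 - z) * w = 1 by rewrite mulrV ?unit_1subM.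
have uuM : u * u - a \in M.
  by move: (mem_sqrt_mod u b_unit baM); rewrite ubM inE => /andP[].
suff : u * (u - a * u^-1 * w) \in M by rewrite nonunitsM (nonunitsE u) u_unit.
have -> : u * (u - a * u^-1 * w) = (u * u - a) - a * z * w.
  transitivity ((u * u - a) - a * z * w - a * w * (u * u^-1 - 1)
                - a * ((1 - z) * w - 1)); first by ring.
  by rewrite zw divrr // !subrr !mulr0 !subr0.
by apply: (nonunitsB R_local) => //; apply: nonunitsMr; apply: nonunitsMl.
Qed.

Lemma coset_map_inj z : z \in M ->
  {in Mcoset b &, injective (fun u => u - a * u^-1 * (1 - z)^-1)}.
Proof.
move=> zM u1 u2 u1b u2b /= eq_u12.
have u1_unit := Mcoset_unit R_local b_unit u1b.
have u2_unit := Mcoset_unit R_local b_unit u2b.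
set w := (1 - z)^-1 in eq_u12 *; have zw : (1 - z) * w = 1 by rewrite mulrV ?unit_1subM.
have c_unit : u1 * u2 + a * w \is a GRing.unit.
  have -> : u1 * u2 + a * w = 2%:R * (b * b) +
     ((u1 - b) * u2 + b * (u2 - b) - (b * b - a) + a * z * w) + a * ((1 - z) * w - 1).
    by ring.
  rewrite zw subrr mulr0 addr0; apply: (unitrD_nonunits R_local).
    by rewrite !unitrM unitr2 b_unit.
  rewrite mem_Mcoset in u1b; rewrite mem_Mcoset in u2b.
  apply: (nonunitsD R_local); first apply: (nonunitsB R_local) => //.
    apply: (nonunitsD R_local).
  - exact: nonunitsMr.
  - exact: nonunitsMl.
  - by apply: nonunitsMr; apply: nonunitsMl.
have : (u1 - u2) * (u1 * u2 + a * w) = 0.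
  transitivity (u1 * u2 * ((u1 - a * u1^-1 * w) - (u2 - a * u2^-1 * w))
      + a * w * u2 * (u1 * u1^-1 - 1) - a * w * u1 * (u2 * u2^-1 - 1)); first by ring.
  by rewrite eq_u12 !divrr // !subrr !mulr0 !addr0 subrr.
by move/(canRL (mulrK c_unit)); rewrite mul0r => /eqP; rewrite subr_eq0 => /eqP.
Qed.

Lemma normKcoset : Kcoset a b * (Kcoset a b)^* = #|R|%:R.
Proof.
rewrite /Kcoset rmorph_sum /= mulr_suml.
transitivity (\sum_(u in Mcoset b) \sum_(z in M)
                taur (1 - z)^-1 * psi (z * (u - a * u^-1 * (1 - z)^-1))).
  apply: eq_bigr => u ubM; have u_unit := Mcoset_unit R_local b_unit ubM.
  rewrite mulr_sumr (@big_inj_card _ _ M (Mcoset b) (fun z => u * (1 - z))).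
  - by apply: eq_bigr => z zM; rewrite phi_mul_conj_scale.
  - by move=> z1 z2 _ _ /= /(mulrI u_unit) /addrI /oppr_inj.
  - move=> z zM; rewrite mem_Mcoset.
    have -> : u * (1 - z) - b = (u - b) - u * z by ring.
    by apply: (nonunitsB R_local); rewrite -?mem_Mcoset // nonunitsMl.
  - by rewrite card_Mcoset.
rewrite exchange_big /=.
transitivity (\sum_(z in M) if z \in socle R then #|M|%:R else 0 : algC).
  apply: eq_bigr => z zM; rewrite -mulr_sumr.
  rewrite -(@big_inj_card _ _ (Mcoset b) M (fun u => u - a * u^-1 * (1 - z)^-1)
                          (fun y => psi (z * y))) /=; first last.
  - by rewrite card_Mcoset.
  - by move=> u; apply: coset_map_nonunits.
  - exact: coset_map_inj.
  rewrite (sum_psi_ideal psi_prim _ R_local).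
  case: ifP => [z_soc|_]; last by rewrite mulr0.
  have Nz_soc : - z \in socle R by case: (is_ideal_socle R) => _ _ + _; apply.
  by rewrite -[1 - z]/(1 + - z) (inv_1socle R_not_field Nz_soc) opprK taur_1socle ?mul1r.
rewrite -big_mkcondr /= (eq_bigl (mem (socle R))) => [|z]; last first.
  by apply/andb_idl/(subsetP (socle_nonunits R_not_field)).
by rewrite sumr_const -(card_nonunits_socle R_local psi_prim) natrM mulr_natr.
Qed.

End CosetSum.

Lemma Kcoset_eq a b u : u \in Mcoset b -> Kcoset a u = Kcoset a b.
Proof. by rewrite mem_Mcoset => ubM; rewrite /Kcoset (Mcoset_eq R_local ubM). Qed.

Lemma sum_Mcoset_phi_mulr a b (G : R -> algC) :
  {in Mcoset b, forall u, G u = G b} ->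
  \sum_(u in Mcoset b) phi a u * G u = Kcoset a b * G b.
Proof. by move=> G_const; rewrite /Kcoset mulr_suml; apply: eq_bigr => u /G_const->. Qed.

Definition Kcross2 (a : R) : algC := \sum_(u in sqrt_mod a) phi a u * (Kcoset a (- u))^*.
Definition Kcross4 (a : R) : algC :=
  \sum_(u in sqrt_mod a) phi a u * (Kcoset a u * (Kcoset a (- u))^* ^+ 2).

(* [Kcross2] and [Kcross4] are the cross terms of
   [|Kcoset a b + Kcoset a (- b)| ^+ 4], written as sums over the square roots
   of [a] so that they can later be summed over [a]. *)
Lemma normK4 a : `|K a| ^+ 4 = 3%:R * #|R|%:R ^+ 2 * (#|sqrt_mod a|%:R / #|M|%:R)
                                + 4%:R * #|R|%:R * Kcross2 a + Kcross4 a.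
Proof.
rewrite K_sqrt_mod /Kcross2 /Kcross4; have [->|[b]] := set_0Vmem (sqrt_mod a).
  by rewrite !big_set0 cards0 normr0 expr0n !mul0r !mulr0 !addr0.
rewrite inE => /andP[b_unit baM].
have Nb_unit : - b \is a GRing.unit by rewrite unitrN.
have NbaM : - b * - b - a \in M by rewrite mulrNN.
have card_roots : #|sqrt_mod a|%:R / #|M|%:R = 2%:R :> algC.
  have -> : sqrt_mod a = Mcoset b :|: Mcoset (- b).
    by apply/setP => u; rewrite in_setU (mem_sqrt_mod u b_unit baM).
  rewrite cardsU (disjoint_setI0 (disjoint_Mcoset_opp b_unit)) cards0 subn0.
  by rewrite !card_Mcoset addnn -mul2n natrM mulfK // card_nonunits_neq0.
have Aopp c u : u \in Mcoset c -> Kcoset a (- u) = Kcoset a (- c).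
  by rewrite -(mem_Mcoset_opp R_local); apply: Kcoset_eq.
rewrite card_roots !(sum_sqrt_mod_split _ b_unit baM).
rewrite !(@sum_Mcoset_phi_mulr a _ (fun u => (Kcoset a (- u))^*));
  try by move=> u /Aopp->.
rewrite !(@sum_Mcoset_phi_mulr a _ (fun u => Kcoset a u * (Kcoset a (- u))^* ^+ 2));
  first last.
- by move=> u u_b; rewrite (Kcoset_eq a u_b) (Aopp _ _ u_b).
- by move=> u u_b; rewrite (Kcoset_eq a u_b) (Aopp _ _ u_b).
rewrite opprK (normC4_add (normKcoset b_unit baM) (normKcoset Nb_unit NbaM)).
by ring.
Qed.

Lemma sum_sqrt_mod_exchange (G : R -> R -> algC) :
  \sum_(a in U) \sum_(u in sqrt_mod a) G a u =
  \sum_(u in U) \sum_(a in Mcoset (u * u)) G a u.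
Proof.
rewrite (exchange_big_dep (fun u => u \in U)) => [|a u _]; last first.
  by rewrite !inE => /andP[].
apply: eq_bigr => u; rewrite inE => u_unit; apply: eq_bigl => a.
rewrite mem_Mcoset [u \in _]inE [a \in _]inE u_unit /= (nonunitsBC R_local).
apply: andb_idl => auuM.
by apply: (unitr_congr R_local) auuM; rewrite unitrM u_unit.
Qed.

Lemma sum_card_sqrt_mod : \sum_(a in U) #|sqrt_mod a|%:R = (#|U| * #|M|)%:R :> algC.
Proof.
rewrite (eq_bigr (fun a => \sum_(u in sqrt_mod a) 1)) => [|a _]; last first.
  by rewrite sumr_const.
rewrite sum_sqrt_mod_exchange (eq_bigr (fun=> #|M|%:R)) => [|u _].
  by rewrite sumr_const natrM mulr_natl.
by rewrite sumr_const card_Mcoset.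
Qed.

Lemma sum_psi_Mcoset s c : c \is a GRing.unit ->
  \sum_(a in Mcoset s) psi (a * c) = 0.
Proof.
move=> c_unit; rewrite (@big_inj_card _ _ M (Mcoset s) (fun m => s + m)).
- rewrite (eq_bigr (fun m => psi (s * c) * psi (c * m))) => [|m _]; last first.
    by rewrite mulrDl psiD [m * c]mulrC.
  rewrite -mulr_sumr (sum_psi_ideal psi_prim _ R_local) ifF ?mulr0 //.
  apply: contraTF c_unit => /(subsetP (socle_nonunits R_not_field)).
  by rewrite nonunitsE.
- by move=> x y _ _; apply: addrI.
- by move=> m mM; rewrite mem_Mcoset addrC addKr.
- by rewrite card_Mcoset.
Qed.

Lemma sum_psi_Mcoset_scale s k c : c \is a GRing.unit ->
  \sum_(a in Mcoset s) k * psi (a * c) = 0.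
Proof. by move=> c_unit; rewrite -mulr_sumr sum_psi_Mcoset ?mulr0. Qed.

Lemma phi_mul_conj a u v : u \is a GRing.unit -> v \is a GRing.unit ->
  phi a u * (phi a v)^* =
  taur u * taur v^-1 * psi (u - v) * psi (a * (u^-1 - v^-1)).
Proof.
by move=> u_unit v_unit; rewrite conj_phi // /phi !opprD !mulrDr !mulrN !psiD; ring.
Qed.

Lemma invB_Mcoset_opp u v w : u \is a GRing.unit -> v \in Mcoset u ->
  w \in Mcoset (- u) -> v^-1 - w^-1 - 2%:R * u^-1 \in M.
Proof.
move=> u_unit vu wNu; have Nu_unit : - u \is a GRing.unit by rewrite unitrN.
have [v_unit w_unit] := (Mcoset_unit R_local u_unit vu, Mcoset_unit R_local Nu_unit wNu).
have -> : v^-1 - w^-1 - 2%:R * u^-1 = (v^-1 - u^-1) + ((- u)^-1 - w^-1).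
  by rewrite invrN; ring.
rewrite mem_Mcoset in vu; rewrite mem_Mcoset in wNu.
apply: (nonunitsD R_local); apply: (nonunits_invB R_local) => //.
by rewrite (nonunitsBC R_local).
Qed.

Lemma sum_Kcross2 : \sum_(a in U) Kcross2 a = 0.
Proof.
rewrite /Kcross2 sum_sqrt_mod_exchange big1 // => u; rewrite inE => u_unit.
have Nu_unit : - u \is a GRing.unit by rewrite unitrN.
under eq_bigr => a _ do rewrite /Kcoset rmorph_sum mulr_sumr.
rewrite exchange_big big1 //= => v vNu; have v_unit := Mcoset_unit R_local Nu_unit vNu.
under eq_bigr => a _ do rewrite phi_mul_conj //.
apply: sum_psi_Mcoset_scale; rewrite -[_ - _](subrK (2%:R * u^-1)) addrC.
apply: (unitrD_nonunits R_local); first by rewrite unitrM unitr2 unitrV.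
by apply: invB_Mcoset_opp; rewrite // mem_Mcoset subrr nonunits0.
Qed.

Lemma sum_Kcross4 : \sum_(a in U) Kcross4 a = 0.
Proof.
rewrite /Kcross4 sum_sqrt_mod_exchange big1 // => u; rewrite inE => u_unit.
have Nu_unit : - u \is a GRing.unit by rewrite unitrN.
under eq_bigr => a _ do rewrite /Kcoset expr2 rmorph_sum mulr_suml mulr_sumr.
rewrite exchange_big big1 // => v vu; have v_unit := Mcoset_unit R_local u_unit vu.
under eq_bigr => a _ do rewrite mulr_suml !mulr_sumr.
rewrite exchange_big big1 // => w1 w1Nu; have w1_unit := Mcoset_unit R_local Nu_unit w1Nu.
under eq_bigr => a _ do rewrite !mulr_sumr.
rewrite exchange_big big1 // => w2 w2Nu; have w2_unit := Mcoset_unit R_local Nu_unit w2Nu.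
under eq_bigr => a _ do rewrite [phi a v * _]mulrCA (mulrA (phi a u)).
under eq_bigr => a _ do rewrite !phi_mul_conj // mulrACA -psiD -mulrDr.
apply: sum_psi_Mcoset_scale.
rewrite -[_ + _](subrK (2%:R * (2%:R * u^-1))) addrC.
apply: (unitrD_nonunits R_local); first by rewrite !unitrM unitr2 unitrV.
have -> : u^-1 - w1^-1 + (v^-1 - w2^-1) - 2%:R * (2%:R * u^-1) =
          (u^-1 - w1^-1 - 2%:R * u^-1) + (v^-1 - w2^-1 - 2%:R * u^-1) by ring.
have uu : u \in Mcoset u by rewrite mem_Mcoset subrr nonunits0.
by apply: (nonunitsD R_local); apply: invB_Mcoset_opp.
Qed.

Lemma sum_normK4 : \sum_(a in U) `|K a| ^+ 4 = 3%:R * #|U|%:R * #|R|%:R ^+ 2.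
Proof.
rewrite (eq_bigr _ (fun a _ => normK4 a)) !big_split /= -!mulr_sumr.
rewrite sum_Kcross2 sum_Kcross4.
rewrite -mulr_suml sum_card_sqrt_mod natrM mulfK ?card_nonunits_neq0 //.
by rewrite !mulr0 !addr0 mulrAC.
Qed.

End Kloosterman.

Theorem mainTheorem12 (R : finComUnitRingType)
  (psi : R -> algC) (tau : {unit R} -> algC) :
  is_local R ->
  (exists x : R, x != 0 /\ x \isn't a GRing.unit) ->
  (2%:R : R) \notin nonunits R ->
  primitive_add_char psi ->
  is_mult_char tau ->
  ~ primitive_mult_char tau ->
  \sum_(a : {unit R}) `|Ktau tau psi (val a)| ^+ 4
    = 3%:R * #|[set: {unit R}]|%:R * (#|[set: R]|%:R) ^+ 2.
Proof.
move=> R_local R_not_field R_odd psi_prim tau_mult tau_nprim.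
under eq_bigr => a _ do rewrite Ktau_K.
rewrite (sum_unit_val (fun x => `|K psi tau x| ^+ 4)) card_units cardsT.
exact: sum_normK4.
Qed.
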